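(* Let $G$ be a finite transitive permutation group on a set $\Omega$ and suppose that $x\in G$ is quasi-semiregular on $\Omega$. If $\Sigma$ is a system of imprimitivity preserved by $G$, then the permutation $x^\Sigma$ induced by $x$ on $\Sigma$ is quasi-semiregular. Equivalently, if $x\in G_\alpha$ is quasi-semiregular on $[G:G_\alpha]$, then for every subgroup $K$ with $G_\alpha\le K\le G$, $x$ is quasi-semiregular on $[G:K]$.
   Context: A permutation $g$ is quasi-semiregular if $\langle g\rangle$ has a unique fixed point and acts semiregularly (only the identity fixes a point) on the remaining points. $[G:K]$ denotes the set of right cosets of $K$ with $G$ acting by right multiplication. *)

From mathcomp Require Import all_boot all_fingroup.
Set Implicit Arguments. Unset Strict Implicit. Unset Printing Implicit Defensive.

Definition quasi_semiregular (U : finType) (S : {set U}) (f : U -> U) : Prop :=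
  exists2 a, a \in S &
    [/\ f a = a,
        (forall b, b \in S -> f b = b -> b = a) &
        (forall b k, b \in S -> b != a -> iter k f b = b ->
           forall c, c \in S -> iter k f c = c)].

Definition block_system (T : finType) (G : {set {perm T}})
  (Sigma : {set {set T}}) : Prop :=
  partition Sigma [set: T] /\
  (forall g B, g \in G -> B \in Sigma -> [set g y | y in B] \in Sigma).

Definition induced_on_blocks (T : finType) (x : {perm T}) : {set T} -> {set T} :=
  fun B => [set x y | y in B].

From mathcomp Require Import all_boot all_fingroup.
Set Implicit Arguments. Unset Strict Implicit.
Local Open Scope group_scope.

(* Let a be the fixed point of x and B0 the block of a, which x^k fixes for
   every k.  If x^k also fixes a block B not containing a, then <x^k> acts
   semiregularly on both B and B0 \ a, so #[x^k] divides #|B| and #|B0| - 1.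
   Transitivity makes all blocks equally large, hence #[x^k] divides 1. *)

Lemma semiregular_card_dvdn (aT : finGroupType) (rT : finType)
    (to : {action aT &-> rT}) (H : {group aT}) (S : {set rT}) :
  [acts H, on S | to] -> {in S, forall b, 'C_H[b | to] = 1} -> #|H| %| #|S|.
Proof.
move=> actsHS free; rewrite -(acts_sum_card_orbit actsHS) dvdn_sum //.
move=> _ /imsetP[b Sb ->].
by rewrite -(card_orbit_stab to H b) free // cards1 muln1.
Qed.

Lemma cycle_acts_perm (T : finType) (y : {perm T}) (S : {set T}) :
  y @: S = S -> [acts <[y]>, on S | 'P].
Proof.
by move=> yS; rewrite cycle_subG /= -astab1_set; apply/astab1P; rewrite /= setactE.
Qed.

Lemma imset_perm1 (T : finType) (A : {set T}) : (1 : {perm T}) @: A = A.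
Proof. by rewrite -[RHS]imset_id; apply: eq_imset => z; rewrite perm1. Qed.

Lemma iter_induced_on_blocks (T : finType) (x : {perm T}) k B :
  iter k (induced_on_blocks x) B = (x ^+ k) @: B.
Proof.
elim: k => [|k IHk] /=; first by rewrite imset_perm1.
by rewrite IHk /induced_on_blocks -imset_comp; apply: eq_imset => z; rewrite expgSr permM.
Qed.

Section BlockSystem.

Variables (T : finType) (G : {group {perm T}}) (Sigma : {set {set T}}).
Hypothesis G_trans : [transitive G, on [set: T] | 'P].
Hypothesis Sigma_blocks : block_system G Sigma.

Let Sigma_partition : partition Sigma [set: T].
Proof. by case: Sigma_blocks. Qed.

Let Sigma_trivI : trivIset Sigma.
Proof. by case/and3P: Sigma_partition. Qed.

Let cover_Sigma a : a \in cover Sigma.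
Proof. by case/and3P: Sigma_partition => /eqP-> _ _; rewrite inE. Qed.

Lemma pblock_Sigma a : pblock Sigma a \in Sigma.
Proof. exact: pblock_mem. Qed.

Lemma mem_pblock_Sigma a : a \in pblock Sigma a.
Proof. by rewrite mem_pblock. Qed.

Lemma pblock_block B b : B \in Sigma -> b \in B -> pblock Sigma b = B.
Proof. exact: def_pblock. Qed.

Lemma block_neq0 B : B \in Sigma -> B != set0.
Proof. by case/and3P: Sigma_partition => _ _ nz0 SigmaB; apply: contraNneq nz0 => <-. Qed.

Lemma imset_pblock g a : g \in G -> g @: pblock Sigma a = pblock Sigma (g a).
Proof.
move=> Gg; have gB_Sigma := Sigma_blocks.2 g _ Gg (pblock_Sigma a).
by symmetry; apply: def_pblock => //; apply/imsetP; exists a; rewrite ?mem_pblock_Sigma.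
Qed.

Lemma card_block B a : B \in Sigma -> #|B| = #|pblock Sigma a|.
Proof.
move=> SigmaB; have [b Bb] := set0Pn _ (block_neq0 SigmaB).
have [g Gg ->] := atransP2 G_trans (in_setT b) (in_setT a).
rewrite -imset_pblock // (pblock_block SigmaB Bb).
by rewrite (card_imset _ (@perm_inj _ g)).
Qed.

Variables (x : {perm T}) (a : T).
Hypotheses (Gx : x \in G) (x_fixes_a : x a = a).
Hypothesis x_semiregular : forall b k, b != a -> (x ^+ k) b = b -> x ^+ k = 1.

Let B0 := pblock Sigma a.

Lemma expg_fixed_point k : (x ^+ k) a = a.
Proof. by rewrite permX iter_fix. Qed.

Lemma imset_pblock_fixed k : (x ^+ k) @: B0 = B0.
Proof. by rewrite imset_pblock ?groupX // expg_fixed_point. Qed.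

Lemma cycle_expg_semiregular k (S : {set T}) :
  a \notin S -> {in S, forall b, 'C_<[x ^+ k]>[b | 'P] = 1}.
Proof.
move=> aS b Sb; apply/trivgP/subsetP=> _ /setIP[/cycleP[j ->] /astab1P /= fixb].
rewrite -expgM in fixb *; rewrite inE (x_semiregular _ fixb) //.
by apply: contraNneq aS => <-.
Qed.

Lemma block_stabilizer_trivial k B :
  B \in Sigma -> B != B0 -> (x ^+ k) @: B = B -> x ^+ k = 1.
Proof.
move=> SigmaB BB0 fixB; set y := x ^+ k.
have aB : a \notin B by apply: contra BB0 => aB; rewrite -(pblock_block SigmaB aB).
have dvd_B : #[y] %| #|B|.
  exact: semiregular_card_dvdn (cycle_acts_perm fixB) (cycle_expg_semiregular k aB).
have dvd_B0a : #[y] %| #|B0 :\ a|.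
  apply: semiregular_card_dvdn; last by apply: (cycle_expg_semiregular k); rewrite !inE eqxx.
  apply: actsD; first exact: cycle_acts_perm (imset_pblock_fixed k).
  by rewrite cycle_subG /= astabs_set1; apply/astab1P; rewrite /= /aperm expg_fixed_point.
move: dvd_B; rewrite (card_block a SigmaB) (cardsD1 a) mem_pblock_Sigma addnC.
by rewrite (dvdn_addr _ dvd_B0a) dvdn1 order_eq1 => /eqP.
Qed.

End BlockSystem.

Theorem lemma2p1 (T : finType) (G : {group {perm T}}) (x : {perm T})
  (Sigma : {set {set T}}) :
  [transitive G, on [set: T] | 'P] ->
  x \in G ->
  quasi_semiregular [set: T] x ->
  block_system G Sigma ->
  quasi_semiregular Sigma (induced_on_blocks x).
Proof.
move=> G_trans Gx [a _ [xa fix_unique semi]] blocks.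
have x_semiregular b k : b != a -> (x ^+ k) b = b -> x ^+ k = 1.
  rewrite permX => ba fixb; apply/permP => c; rewrite perm1 permX.
  exact: semi (in_setT b) ba fixb c (in_setT c).
have trivial_block := block_stabilizer_trivial G_trans blocks Gx xa x_semiregular.
exists (pblock Sigma a); first exact: pblock_Sigma blocks a.
split.
- by have := imset_pblock_fixed blocks Gx xa 1; rewrite expg1.
- move=> B SigmaB fixB; apply/eqP/negPn/negP => BB0.
  have x1 : x = 1 by have := trivial_block 1%N B SigmaB BB0; rewrite !expg1; apply.
  have [b Bb] := set0Pn _ (block_neq0 blocks SigmaB).
  have ba : b = a by apply: fix_unique; rewrite ?in_setT // x1 perm1.
  by move: BB0; rewrite -(pblock_block blocks SigmaB Bb) ba eqxx.
- move=> B k SigmaB BB0; rewrite iter_induced_on_blocks.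
  move=> /(trivial_block k B SigmaB BB0) xk1 C _.
  by rewrite iter_induced_on_blocks xk1 imset_perm1.
Qed.
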